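(* Let $\lambda:V^X\to\mathbb{N}\cup\{+\infty\}$ be a labeling function, $v\in V^X$, and let $\rho=\rho_0\rho_1\dots$ be a $\lambda$-consistent play in $\mathrm{Plays}_X(v)$. Then there exists an infinite path $\pi=\pi_0\pi_1\dots$ in $\mathbb{C}(\lambda)$ such that $\pi_0=v^C$ and, for every $n\in\mathbb{N}$, $\pi_n$ is of the form $(\rho_n,(c'_i)_{i\in\Pi})$ (i.e., $\rho$ is the projection of $\pi$ on $V^X$).
   Context: Let $\mathcal{G}$ be a quantitative reachability game on an arena $G=(\Pi,V,(V_i)_{i\in\Pi},E)$ (finite player set $\Pi$, finite vertex set $V$, partition $(V_i)$, every vertex has a successor) with targets $F_i\subseteq V$. Its extended arena $X$ has vertices $V^X=V\times2^\Pi$, edges $((v,I),(v',I'))\in E^X$ iff $(v,v')\in E$ and $I'=I\cup\{i:v'\in F_i\}$, $(v,I)\in V^X_i$ iff $v\in V_i$; for $u\in V^X$, $I(u)$ is its second component. For a play $\rho$ of $X$, $\mathrm{Cost}_i(\rho)$ is the least $k$ with $i\in I(\rho_k)$, or $+\infty$; $\mathrm{Plays}_X(v)$ is the set of plays of $X$ starting at $v$. A play $\rho$ of $X$ is $\lambda$-consistent if $\mathrm{Cost}_i(\rho_{\ge n})\le\lambda(\rho_n)$ for all $n$ and all $i$ with $\rho_n\in V^X_i$, where $\rho_{\ge n}=\rho_n\rho_{n+1}\dots$. Counter graph $\mathbb{C}(\lambda)$: let $K$ be the maximum of the finite values of $\lambda$ ($0$ if none) and $\mathcal{K}=\{0,\dots,K\}\cup\{+\infty\}$;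 vertices are $V^X\times\mathcal{K}^\Pi$, and there is an edge from $(u,(c_i)_i)$ to $(u',(c'_i)_i)$ iff $(u,u')\in E^X$ and for every $i\in\Pi$: either $i\in I(u')$ and $c'_i=0$; or $i\notin I(u')$, $u'\notin V^X_i$, $c_i>1$ and $c'_i=c_i-1$; or $i\notin I(u')$, $u'\in V^X_i$, $c_i>1$ and $c'_i=\min(c_i-1,\lambda(u'))$ (with $+\infty-1=+\infty$). The starting vertex of $u\in V^X$ is $u^C=(u,(c_i)_i)$ with $c_i=0$ if $i\in I(u)$, $c_i=\lambda(u)$ if $i\notin I(u)$ and $u\in V^X_i$, and $c_i=+\infty$ otherwise. *)

From Stdlib Require Import ClassicalEpsilon.
From mathcomp Require Import all_boot.
Set Implicit Arguments. Unset Strict Implicit. Unset Printing Implicit Defensive.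

(* Extended naturals N ∪ {+oo}: [Some n] = n, [None] = +oo. *)
Definition enat := option nat.

Definition ele (a b : enat) : Prop :=
  match b with
  | None => True
  | Some m => match a with None => False | Some k => k <= m end
  end.

Definition egt1 (c : enat) : bool := if c is Some n then 1 < n else true.
Definition epred (c : enat) : enat := if c is Some n then Some n.-1 else None.
Definition emin (a b : enat) : enat :=
  match a, b with
  | None, _ => b
  | _, None => a
  | Some x, Some y => Some (minn x y)
  end.

Section Game.
(* Players Pi, vertices V, partition given by owner (v ∈ V_i iff owner v = i),
   edge relation E, targets F i. *)
Variables (Pi V : finType) (owner : V -> Pi) (E : rel V) (F : Pi -> {set V}).

Definition XV := (V * {set Pi})%type.
Definition Iof (u : XV) : {set Pi} := u.2.
Definition XownedBy (u : XV) (i : Pi) : bool := owner u.1 == i.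
Definition Xedge (u u' : XV) : bool :=
  E u.1 u'.1 && (u'.2 == u.2 :|: [set i | u'.1 \in F i]).

Definition Xplay (rho : nat -> XV) : Prop := forall n, Xedge (rho n) (rho n.+1).
Definition XplayFrom (v : XV) (rho : nat -> XV) : Prop := Xplay rho /\ rho 0 = v.

Definition suffix (rho : nat -> XV) (n : nat) : nat -> XV := fun k => rho (n + k).

Definition Cost (i : Pi) (rho : nat -> XV) : enat :=
  match excluded_middle_informative (exists k, (fun k => i \in Iof (rho k)) k) with
  | left H => Some (ex_minn H)
  | right _ => None
  end.

Definition consistent (lam : XV -> enat) (rho : nat -> XV) : Prop :=
  forall n i, XownedBy (rho n) i -> ele (Cost i (suffix rho n)) (lam (rho n)).

Definition Kmax (lam : XV -> enat) : nat := \max_(u : XV) odflt 0 (lam u).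

Definition CV := (XV * (Pi -> enat))%type.

Definition inCV (lam : XV -> enat) (x : CV) : Prop :=
  forall i, match x.2 i with Some k => is_true (k <= Kmax lam) | None => True end.

Definition Cedge (lam : XV -> enat) (x y : CV) : Prop :=
  Xedge x.1 y.1 /\
  forall i,
    (i \in Iof y.1 /\ y.2 i = Some 0) \/
    (i \notin Iof y.1 /\ ~~ XownedBy y.1 i /\ egt1 (x.2 i) /\ y.2 i = epred (x.2 i)) \/
    (i \notin Iof y.1 /\ XownedBy y.1 i /\ egt1 (x.2 i) /\
       y.2 i = emin (epred (x.2 i)) (lam y.1)).

Definition startC (lam : XV -> enat) (u : XV) : CV :=
  (u, fun i => if i \in Iof u then Some 0
               else if XownedBy u i then lam u else None).

End Game.

From Stdlib Require Import ClassicalEpsilon.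
From mathcomp Require Import all_boot.

Set Implicit Arguments. Unset Strict Implicit. Unset Printing Implicit Defensive.

(* The path in the counter graph is forced: after each move of the play every
   counter is updated by the rule of the counter graph.  The only thing to check
   is that no counter ever has to be decremented from 1 or 0, i.e. that a player
   outside its target always has a counter > 1.  This follows from the invariant
   that a finite counter k at position n guarantees that the player reaches its
   target within k steps of n: the invariant is preserved by decrementing, and
   taking the minimum with the label is justified by lambda-consistency. *)

Definition ebounded (K : nat) (c : enat) : Prop :=
  if c is Some k then k <= K else True.

Lemma ebounded_epred K c : ebounded K c -> ebounded K (epred c).
Proof. by case: c => [k|] //= /(leq_trans (leq_pred k)). Qed.

Lemma ebounded_emin K a b : ebounded K a -> ebounded K b -> ebounded K (emin a b).
Proof. by case: a b => [a|] [b|] //= Ha Hb; rewrite geq_min Ha. Qed.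

Section CounterGraph.

Variables (Pi V : finType) (owner : V -> Pi) (E : rel V) (F : Pi -> {set V}).
Variable lam : XV Pi V -> enat.

Lemma ebounded_lam u : ebounded (Kmax lam) (lam u).
Proof.
case Hu: (lam u) => [l|] //=.
by have := @leq_bigmax _ (fun u => odflt 0 (lam u)) u; rewrite Hu.
Qed.

Definition counter_step (u : XV Pi V) (c : enat) (i : Pi) : enat :=
  if i \in Iof u then Some 0
  else if XownedBy owner u i then emin (epred c) (lam u)
  else epred c.

Lemma ebounded_counter_step u c i :
  ebounded (Kmax lam) c -> ebounded (Kmax lam) (counter_step u c i).
Proof.
move=> Hc; rewrite /counter_step.
case: ifP => _ //; case: ifP => _; last exact: ebounded_epred.
exact/ebounded_emin/ebounded_lam/ebounded_epred.
Qed.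

Lemma Cedge_counter_step u u' (c : Pi -> enat) :
  Xedge E F u u' -> (forall i, i \notin Iof u' -> egt1 (c i)) ->
  Cedge owner E F lam (u, c) (u', fun i => counter_step u' (c i) i).
Proof.
move=> Huu' Hgt1; split=> // i /=; rewrite /counter_step.
case: ifPn => Hi; first by left.
by right; case: ifP => Ho; [right | left]; have := Hgt1 i Hi.
Qed.

Lemma startC_counter_step u :
  startC owner lam u = (u, fun i => counter_step u None i).
Proof. by []. Qed.

Definition reached_within (rho : nat -> XV Pi V) (n : nat) (i : Pi) (c : enat)
    : Prop :=
  forall k, c = Some k -> exists2 j, j <= k & i \in Iof (rho (n + j)).

Lemma reached_within0 rho n i : i \in Iof (rho n) -> reached_within rho n i (Some 0).
Proof. by move=> Hi _ [<-]; exists 0; rewrite ?addn0. Qed.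

Lemma reached_within_emin rho n i a b :
  reached_within rho n i a -> reached_within rho n i b ->
  reached_within rho n i (emin a b).
Proof.
by case: a b => [a|] [b|] //= Ha Hb _ [<-]; rewrite /minn; case: ifP => _;
  [apply: Ha | apply: Hb].
Qed.

Lemma Iof_play_step rho n i :
  Xplay E F rho -> i \in Iof (rho n) -> i \in Iof (rho n.+1).
Proof.
by move=> /(_ n) /andP[_ /eqP HI] Hi; rewrite /Iof HI in_setU Hi.
Qed.

Lemma Cost_reached i (rho : nat -> XV Pi V) k :
  Cost i rho = Some k -> i \in Iof (rho k).
Proof.
rewrite /Cost; case: excluded_middle_informative => // H [<-].
by case: ex_minnP.
Qed.

Section AlongPlay.

Variable rho : nat -> XV Pi V.
Hypothesis rho_play : Xplay E F rho.
Hypothesis rho_consistent : consistent owner lam rho.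

Lemma reached_within_lam n i :
  XownedBy owner (rho n) i -> reached_within rho n i (lam (rho n)).
Proof.
move=> /rho_consistent Hcost l Hl; move: Hcost; rewrite Hl.
case Hk: Cost => [k|] //= Hkl.
by exists k => //; apply: Cost_reached Hk.
Qed.

(* A finite counter forces the target to be reached, but not at step [n] or
   [n + 1]; hence the counter was at least [2]. *)
Lemma reached_within_next n i c :
  reached_within rho n i c -> i \notin Iof (rho n.+1) ->
  egt1 c /\ reached_within rho n.+1 i (epred c).
Proof.
case: c => [k|] //= Hc Hi; have [j jk Hj] := Hc k erefl.
have j_gt1 : 1 < j.
  case: j jk Hj => [|[|j]] // _; last by rewrite addn1 (negbTE Hi).
  by rewrite addn0 => /(Iof_play_step rho_play); rewrite (negbTE Hi).
split; first exact: leq_trans jk.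
move=> _ [<-]; exists j.-1; first by rewrite -!subn1 leq_sub2r.
by rewrite addSn -addnS prednK // ltnW.
Qed.

Lemma reached_within_counter_step n i c :
  (i \notin Iof (rho n) -> reached_within rho n i (epred c)) ->
  reached_within rho n i (counter_step (rho n) c i).
Proof.
rewrite /counter_step; case: ifPn => Hi Hc; first exact: reached_within0.
case: ifP => Ho; last exact: Hc.
exact/reached_within_emin/reached_within_lam/Ho/Hc.
Qed.

Fixpoint counters (n : nat) : Pi -> enat :=
  fun i => counter_step (rho n) (if n is n'.+1 then counters n' i else None) i.

Lemma counters_reached_within n i : reached_within rho n i (counters n i).
Proof.
elim: n i => [|n IH] i; apply: reached_within_counter_step => // Hi.
exact: (reached_within_next (IH i) Hi).2.
Qed.

Lemma counters_ebounded n i : ebounded (Kmax lam) (counters n i).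
Proof. by elim: n i => [|n IH] i; apply: ebounded_counter_step. Qed.

Lemma Cedge_counters n :
  Cedge owner E F lam (rho n, counters n) (rho n.+1, counters n.+1).
Proof.
apply: Cedge_counter_step => // i Hi.
exact: (reached_within_next (@counters_reached_within n i) Hi).1.
Qed.

End AlongPlay.

End CounterGraph.

Theorem lemma3p5 (Pi V : finType) (owner : V -> Pi) (E : rel V)
  (F : Pi -> {set V})
  (Hsucc : forall v : V, exists v' : V, E v v')
  (lam : XV Pi V -> enat) (v : XV Pi V) (rho : nat -> XV Pi V) :
  XplayFrom E F v rho ->
  consistent owner lam rho ->
  exists pi : nat -> CV Pi V,
    pi 0 = startC owner lam v /\
    (forall n, inCV lam (pi n)) /\
    (forall n, Cedge owner E F lam (pi n) (pi n.+1)) /\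
    (forall n, (pi n).1 = rho n).
Proof.
move=> [rho_play rho0] rho_consistent.
exists (fun n => (rho n, counters owner lam rho n)).
split; first by rewrite startC_counter_step -rho0.
split; first by move=> n i; apply: counters_ebounded.
by split=> // n; apply: Cedge_counters.
Qed.
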